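(* Let $A$ be a nonempty set of positive integers and let $n$ be a positive integer. Then (a) $\displaystyle cl_A(n)=\sum_{k=0}^{n-1}cl_A(k)\,\tau^s_A(n-k)$; (b) $\displaystyle\sum_{k=0}^{n}cl_A(k)\,q_A(n-k)-\sum_{t=0}^{n-1}cl_A(t)\,N^q_A(n-t)=q_A(n)$.
   Context: A composition of $m$ is an ordered sequence of positive integers summing to $m$; it is Carlitz if each part differs from its adjacent parts. $cl_A(m)$ is the number of Carlitz compositions of $m$ with all parts in $A$, with $cl_A(0)=1$. $q_A(m)$ is the number of partitions of $m$ into pairwise distinct parts from $A$ ($q_A(0)=1$), and $N^q_A(m)$ is the total number of parts over all such partitions. $\tau^s_A(m)=\sum_{a\in A,\,a\mid m}(-1)^{m/a-1}$. *)

From HB Require Import structures.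
From mathcomp Require Import all_boot all_order all_algebra.
Set Implicit Arguments. Unset Strict Implicit. Unset Printing Implicit Defensive.
Import Order.TTheory GRing.Theory Num.Theory.

Fixpoint seqs_of (l : nat) (xs : seq nat) : seq (seq nat) :=
  match l with
  | 0 => [:: [::]]
  | l'.+1 => [seq x :: s | x <- xs, s <- seqs_of l' xs]
  end.

(* all compositions of m: sequences of positive integers summing to m
   (such a sequence has length <= m and parts in 1..m) *)
Definition compositions (m : nat) : seq (seq nat) :=
  flatten [seq [seq s <- seqs_of l (iota 1 m) | sumn s == m] | l <- iota 0 m.+1].

Definition carlitz (s : seq nat) : bool :=
  if s is x :: s' then path (fun a b => a != b) x s' else true.

Definition cl (A : pred nat) (m : nat) : nat :=
  count (fun s => all A s && carlitz s) (compositions m).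

(* partitions of m into pairwise distinct parts from A, as subsets of {0..m} *)
Definition distinct_partitions (A : pred nat) (m : nat) : {set {set 'I_m.+1}} :=
  [set S : {set 'I_m.+1} | [forall i in S, A i] && (\sum_(i in S) (i : nat) == m)].

Definition qA (A : pred nat) (m : nat) : nat := #|distinct_partitions A m|.

Definition NqA (A : pred nat) (m : nat) : nat :=
  \sum_(S in distinct_partitions A m) #|S|.

Definition tauS (A : pred nat) (m : nat) : int :=
  \sum_(1 <= a < m.+1 | A a && (a %| m)) (-1) ^+ (m %/ a).-1.

(* Both identities come from singling out one part a.  A Carlitz composition
   of m with first part a is a followed by a Carlitz composition of m - a whose
   first part is not a; a partition of m into distinct parts containing a is
   a added to a partition of m - a avoiding a.  Hence both counts satisfy
   K(m, a) = [a in A] (f(m - a) - K(m - a, a)) with f = cl_A resp. q_A, which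
   unrolls to the alternating sum of f(m - a), f(m - 2a), ...; summing over a
   gives f * tau^s_A, where * is the convolution.  This is (a) for f = cl_A,
   and gives N^q_A = q_A * tau^s_A.  Then cl_A * N^q_A = q_A * (cl_A * tau^s_A),
   which by (a) is q_A * cl_A minus the term q_A(n) cl_A(0): this is (b). *)

From mathcomp Require Import all_boot all_order all_algebra zify.
Import Order.TTheory GRing.Theory Num.Theory.
Set Implicit Arguments. Unset Strict Implicit.

Lemma mem_seqs_of l xs s :
  (s \in seqs_of l xs) = (size s == l) && all (mem xs) s.
Proof.
elim: l s => [|l IH] [|x t] //=.
- by apply/allpairsP => -[[y u] /= [_ _]].
- apply/allpairsP/idP => [[[y u] /= [Hy Hu [-> ->]]]|/andP[Hs /andP[Hx Ht]]].
    by move: Hu; rewrite IH => /andP[/eqP-> ->]; rewrite eqxx Hy.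
  by exists (x, t); split => //=; rewrite IH -eqSS Hs Ht.
Qed.

Lemma uniq_seqs_of l xs : uniq xs -> uniq (seqs_of l xs).
Proof.
move=> Uxs; elim: l => [|l IH] //=.
by apply: allpairs_uniq => // -[x s] [y t] _ _ /= [-> ->].
Qed.

Lemma size_le_sumn s : all (fun x => 0 < x) s -> size s <= sumn s.
Proof. by elim: s => //= x s IH /andP[x_gt0 /IH]; lia. Qed.

Lemma mem_leq_sumn s x : x \in s -> x <= sumn s.
Proof. by elim: s => //= y s IH; rewrite in_cons => /orP[/eqP->|/IH]; lia. Qed.

Lemma mem_compositions m s :
  (s \in compositions m) = all (fun x => 0 < x) s && (sumn s == m).
Proof.
apply/flatten_mapP/idP => [[l _]|/andP[s_pos /eqP sum_s]].
  rewrite mem_filter mem_seqs_of => /andP[-> /andP[_ s_iota]]; rewrite andbT.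
  by apply/allP => x /(allP s_iota); rewrite inE mem_iota; lia.
exists (size s); first by rewrite mem_iota add0n ltnS -sum_s size_le_sumn.
rewrite mem_filter sum_s eqxx mem_seqs_of eqxx /=.
apply/allP => x x_s; have := mem_leq_sumn x_s; have := allP s_pos x x_s.
by rewrite inE mem_iota; lia.
Qed.

Lemma uniq_flatten_map_key (I : eqType) (T : eqType) (k : T -> I)
    (r : seq I) (F : I -> seq T) :
  uniq r -> (forall i, uniq (F i)) -> (forall i x, x \in F i -> k x = i) ->
  uniq (flatten (map F r)).
Proof.
move=> Ur UF kF; elim: r Ur => //= i r IH /andP[i_r Ur].
rewrite cat_uniq UF IH //= andbT; apply/hasPn => x /flatten_mapP[j j_r x_Fj].
by apply: contraNN i_r => /kF kx; rewrite -kx (kF _ _ x_Fj).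
Qed.

Lemma uniq_compositions m : uniq (compositions m).
Proof.
apply: (@uniq_flatten_map_key _ _ size); first exact: iota_uniq.
  by move=> l; rewrite filter_uniq // uniq_seqs_of // iota_uniq.
by move=> l s; rewrite mem_filter mem_seqs_of => /andP[_ /andP[/eqP]].
Qed.

Lemma count_by_key (T : eqType) (p : pred T) (k : T -> nat) (r : seq T) lo hi :
  {in r, forall x, lo <= k x < hi} ->
  count p r = \sum_(lo <= i < hi) count (fun x => p x && (k x == i)) r.
Proof.
elim: r => [|x r IH] k_r /=; first by rewrite big1.
rewrite big_split /= -IH => [|y y_r]; last by apply: k_r; rewrite in_cons y_r orbT.
congr (_ + _); case: (p x) => /=; last by rewrite big1.
rewrite (bigD1_seq (k x)) ?iota_uniq ?mem_index_iota ?k_r ?mem_head //= eqxx.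
by rewrite big1 // => i; rewrite eq_sym => /negbTE->.
Qed.

Lemma count_predI_predC (T : Type) (p q : pred T) s :
  count (predI p q) s + count (predI p (predC q)) s = count p s.
Proof. by elim: s => //= x s <-; case: (p x) (q x) => [] [] /=; lia. Qed.

Definition cl_head (A : pred nat) m a : nat :=
  count (fun s => all A s && carlitz s && (head 0 s == a)) (compositions m).

Lemma carlitz_cons a t : 0 < a ->
  carlitz (a :: t) = carlitz t && (head 0 t != a).
Proof. by case: t => [|b u] /=; [case: a | rewrite andbC eq_sym]. Qed.

Lemma compositions_head m a : 0 < a <= m ->
  perm_eq [seq s <- compositions m | head 0 s == a]
          [seq a :: t | t <- compositions (m - a)].
Proof.
move=> /andP[a_gt0 a_le_m]; apply: uniq_perm.
- by rewrite filter_uniq // uniq_compositions.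
- by rewrite map_inj_uniq ?uniq_compositions // => s t [].
move=> [|x t]; rewrite mem_filter /=.
  by rewrite eq_sym gtn_eqF //=; apply/esym/mapP => -[].
apply/idP/mapP => [/andP[/eqP-> ]|[u u_comp [-> ->]]].
  rewrite mem_compositions /= => /andP[/andP[_ t_pos] /eqP sum_t].
  by exists t => //; rewrite mem_compositions t_pos /=; apply/eqP; lia.
move: u_comp; rewrite !mem_compositions /= => /andP[-> /eqP sum_u].
by rewrite eqxx a_gt0 /=; apply/eqP; lia.
Qed.

Section CarlitzFirstPart.
Variable A : pred nat.

Lemma cl_head_gt m a : m < a -> cl_head A m a = 0.
Proof.
move=> m_lt_a; apply/eqP; rewrite -leqn0 leqNgt -has_count.
apply/hasP => -[s]; rewrite mem_compositions => /andP[_ /eqP sum_s] /andP[_ /eqP].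
by case: s sum_s => /= [|x t]; lia.
Qed.

Lemma cl_head_rec m a : 0 < a <= m ->
  cl_head A m a = A a * (cl A (m - a) - cl_head A (m - a) a).
Proof.
move=> /[dup] /andP[a_gt0 _] a_m.
rewrite /cl_head -count_filter (permP (compositions_head a_m)) count_map.
have -> : cl A (m - a) - cl_head A (m - a) a =
    count (fun t => all A t && carlitz t && (head 0 t != a)) (compositions (m - a)).
  by rewrite /cl /cl_head -(count_predI_predC _ (fun t => head 0 t == a)) addKn.
case: (boolP (A a)) => Aa.
  rewrite mul1n; apply: eq_count => t; rewrite /preim /= -[path _ a t]/(carlitz (a :: t)).
  by rewrite carlitz_cons // Aa andbA.
rewrite mul0n -(count_pred0 (compositions (m - a))).
by apply: eq_count => t /=; rewrite (negbTE Aa).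
Qed.

Lemma cl_sum_head m : 0 < m -> cl A m = \sum_(1 <= a < m.+1) cl_head A m a.
Proof.
move=> m_gt0; apply: count_by_key => -[|x t]; rewrite mem_compositions /=.
  by move/eqP; lia.
by move=> /andP[/andP[x_gt0 _] /eqP]; lia.
Qed.

End CarlitzFirstPart.

(* Distinct partitions as subsets of a fixed universe 'I_B.+1, so that
   partitions of m and of m - a live in the same type. *)
Definition dparts (A : pred nat) B m : {set {set 'I_B.+1}} :=
  [set S : {set 'I_B.+1} | [forall i in S, A i] && (\sum_(i in S) (i : nat) == m)].

Lemma mem_leq_sum_set n (S : {set 'I_n}) (i : 'I_n) :
  i \in S -> i <= \sum_(j in S) (j : nat).
Proof. by move=> i_S; rewrite (big_setD1 _ i_S) leq_addr. Qed.

Section WidenUniverse.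
Variables (A : pred nat) (B m : nat).
Hypothesis m_le_B : m <= B.

Let w : 'I_m.+1 -> 'I_B.+1 := widen_ord (m_le_B : m.+1 <= B.+1).

Let w_inj : injective w.
Proof. by move=> i j /(congr1 val) ij; apply: val_inj. Qed.

Lemma dparts_widen : dparts A B m = [set w @: S | S : {set 'I_m.+1} in dparts A m m].
Proof.
apply/setP => T; rewrite inE; apply/idP/imsetP => [|[S]].
  move=> /andP[/forallP A_T /eqP sum_T].
  have T_im : T = w @: [set j | w j \in T].
    apply/setP => i; apply/idP/imsetP => [i_T|[j]]; last by rewrite inE => j_T ->.
    have i_lt : i < m.+1 by rewrite ltnS -sum_T mem_leq_sum_set.
    have w_i : w (Ordinal i_lt) = i by apply: val_inj.
    by exists (Ordinal i_lt); rewrite ?inE w_i.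
  exists [set j | w j \in T] => //; rewrite inE; apply/andP; split.
    by apply/forallP => j; rewrite inE; exact: A_T.
  by apply/eqP; rewrite -[RHS]sum_T [in RHS]T_im big_imset //= => i j _ _ /w_inj.
rewrite inE => /andP[/forallP A_S /eqP sum_S] ->; apply/andP; split.
  by apply/forallP => i; apply/implyP => /imsetP[j j_S ->]; exact: (implyP (A_S j)).
by rewrite big_imset //= ?sum_S // => i j _ _ /w_inj.
Qed.

Lemma card_dparts_widen : #|dparts A B m| = qA A m.
Proof. by rewrite dparts_widen card_in_imset // => S1 S2 _ _ /(imset_inj w_inj). Qed.

Lemma sum_card_dparts_widen : \sum_(S in dparts A B m) #|S| = NqA A m.
Proof.
rewrite dparts_widen big_imset /= => [|S1 S2 _ _ /(imset_inj w_inj)//].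
by apply: eq_bigr => S _; rewrite card_imset.
Qed.

End WidenUniverse.

(* [inord a] denotes a only when a <= B, hence the bounds below. *)
Definition dparts_with (A : pred nat) B m a : {set {set 'I_B.+1}} :=
  [set S in dparts A B m | inord a \in S].

Lemma sum_card_double_count (T : finType) (P : {set {set T}}) :
  \sum_(S in P) #|S| = \sum_(i : T) #|[set S in P | i \in S]|.
Proof.
under eq_bigr do rewrite -sum1_card.
rewrite (exchange_big_dep xpredT) //=; apply: eq_bigr => i _.
by rewrite -sum1_card; apply: eq_bigl => S; rewrite inE.
Qed.

Section PartitionsWithPart.
Variables (A : pred nat) (B : nat).

Lemma dparts_with_gt m a : a <= B -> m < a -> dparts_with A B m a = set0.
Proof.
move=> a_le_B m_lt_a; apply/setP => S; rewrite !inE.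
apply/negP => /andP[/andP[_ /eqP sum_S] /mem_leq_sum_set].
by rewrite sum_S inordK //; lia.
Qed.

Lemma dparts_with_rec m a : A a -> 0 < a <= m -> m <= B ->
  dparts_with A B m a =
  [set inord a |: S | S in [set S in dparts A B (m - a) | inord a \notin S]].
Proof.
move=> Aa /andP[a_gt0 a_le_m] m_le_B; set x : 'I_B.+1 := inord a.
have x_a : x = a :> nat by rewrite inordK //; lia.
apply/setP => S; rewrite !inE; apply/idP/imsetP.
  move=> /andP[/andP[/forallP A_S /eqP sum_S] x_S].
  exists (S :\ x); last by rewrite setD1K.
  rewrite !inE eqxx andbT; apply/andP; split.
    by apply/forallP => i; rewrite !inE; apply/implyP => /andP[_]; exact: (implyP (A_S i)).
  by move: sum_S; rewrite (big_setD1 _ x_S) /= x_a => <-; rewrite addKn.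
move=> [T]; rewrite !inE => /andP[/andP[/forallP A_T /eqP sum_T] x_T] ->.
rewrite setU11 andbT; apply/andP; split.
  apply/forallP => i; apply/implyP; rewrite !inE => /orP[/eqP->|]; first by rewrite x_a.
  exact: (implyP (A_T i)).
by rewrite big_setU1 //= sum_T x_a; apply/eqP; lia.
Qed.

Lemma card_dparts_with_rec m a : 0 < a <= m -> m <= B ->
  #|dparts_with A B m a| =
  A a * (#|dparts A B (m - a)| - #|dparts_with A B (m - a) a|).
Proof.
move=> a_m m_le_B; set x : 'I_B.+1 := inord a.
have x_a : x = a :> nat by rewrite inordK //; lia.
case: (boolP (A a)) => Aa; last first.
  rewrite mul0n; apply/eqP; rewrite cards_eq0; apply/eqP/setP => S; rewrite !inE.
  by apply/negP => /andP[/andP[/forallP A_S _] /(implyP (A_S _))]; rewrite x_a (negbTE Aa).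
rewrite mul1n dparts_with_rec // card_in_imset => [|S1 S2]; last first.
  rewrite !inE => /andP[_ x_S1] /andP[_ x_S2] S12.
  by rewrite -(setU1K x_S1) -(setU1K x_S2) S12.
rewrite /dparts_with -/x -(cardsID [set S : {set 'I_B.+1} | x \in S] (dparts A B (m - a))).
by rewrite -setIdE addKn setDE setIdE; congr #|_ :&: _|; apply/setP => S; rewrite !inE.
Qed.

Hypothesis A_pos : forall a, A a -> 0 < a.

Lemma NqA_sum_dparts_with m : m <= B ->
  NqA A m = \sum_(1 <= a < m.+1) #|dparts_with A B m a|.
Proof.
move=> m_le_B.
rewrite -(sum_card_dparts_widen A m_le_B) sum_card_double_count big_mknat.
rewrite big_ltn // (@big_cat_nat _ _ _ m.+1) //=.
have no_zero : #|dparts_with A B m 0| = 0.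
  apply/eqP; rewrite cards_eq0; apply/eqP/setP => S; rewrite !inE.
  by apply/negP => /andP[/andP[/forallP A_S _] /(implyP (A_S _)) /A_pos]; rewrite inordK.
have tail_zero : \sum_(m.+1 <= a < B.+1) #|dparts_with A B m a| = 0.
  rewrite big_nat_cond big1 // => a /andP[/andP[m_lt_a a_le_B] _].
  by rewrite dparts_with_gt ?cards0.
by rewrite no_zero tail_zero add0n addn0.
Qed.

End PartitionsWithPart.

Local Open Scope ring_scope.

Lemma big_nat_dvd (V : nmodType) (a m : nat) (F : nat -> V) : (0 < a)%N ->
  \sum_(1 <= d < m.+1 | (a %| d)%N) F d = \sum_(0 <= j < m %/ a) F (j.+1 * a)%N.
Proof.
move=> a_gt0; rewrite big_mkcond; elim: m => [|m IH]; first by rewrite div0n !big_geq.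
rewrite big_nat_recr //= IH; case: (boolP (a %| m.+1)%N) => [a_dvd|a_ndvd]; last first.
  by rewrite addr0 divnS // (negbTE a_ndvd).
have div_succ : (m.+1 %/ a = (m %/ a).+1)%N by rewrite divnS // a_dvd.
by rewrite div_succ big_nat_recr //= -div_succ divnK.
Qed.

Lemma tauS_widen (A : pred nat) m d : (0 < d <= m)%N ->
  tauS A d = \sum_(1 <= a < m.+1 | A a && (a %| d)%N) (-1) ^+ (d %/ a).-1.
Proof.
move=> /andP[d_gt0 d_le_m]; rewrite /tauS (big_nat_widen _ _ m.+1) ?ltnS //.
apply: eq_bigl => a; case: (boolP (a %| d)%N) => [/(dvdn_leq d_gt0)|]; last by rewrite !andbF.
by rewrite ltnS => ->; rewrite andbT.
Qed.

Section FirstPartRecursion.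
Variables (A : pred nat) (B : nat) (f : nat -> int) (K : nat -> nat -> int).
Hypothesis K_gt : forall m a, (a <= B)%N -> (m < a)%N -> K m a = 0.
Hypothesis K_rec : forall m a, (0 < a <= m)%N -> (m <= B)%N ->
  K m a = (A a)%:Z * (f (m - a)%N - K (m - a)%N a).

Lemma first_part_alternating m a : (0 < a <= B)%N -> (m <= B)%N ->
  K m a = (A a)%:Z * \sum_(0 <= j < m %/ a) (-1) ^+ j * f (m - j.+1 * a)%N.
Proof.
move=> /andP[a_gt0 a_le_B]; elim/ltn_ind: m => m IH m_le_B.
have [m_lt_a|a_le_m] := ltnP m a.
  by rewrite K_gt // divn_small // big_geq // mulr0.
have div_sub : (m %/ a = ((m - a) %/ a).+1)%N.
  by rewrite -[in LHS](subnKC a_le_m) divnDl ?dvdnn // divnn a_gt0 add1n.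
rewrite K_rec ?a_gt0 // IH ?div_sub; [|lia|lia].
rewrite big_nat_recl //= expr0 mul1r mul1n.
case: (A a); last by rewrite !mul0r.
rewrite !mul1r -sumrN; congr (_ + _); apply: eq_bigr => j _.
by rewrite exprS mulN1r mulNr; congr (- (_ * f _)); lia.
Qed.

Lemma sum_first_part_tauS m : (m <= B)%N ->
  \sum_(1 <= a < m.+1) K m a = \sum_(0 <= k < m) f k * tauS A (m - k).
Proof.
move=> m_le_B.
have -> : \sum_(0 <= k < m) f k * tauS A (m - k) =
          \sum_(1 <= d < m.+1) f (m - d)%N * tauS A d.
  rewrite big_nat_rev big_add1 /=; apply: eq_big_nat => k /andP[_ k_lt_m].
  by rewrite add0n subKn.
under [RHS]eq_big_nat => d d_range do rewrite (tauS_widen A d_range) big_distrr.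
rewrite (exchange_big_dep_nat xpredT) //=; apply: eq_big_nat => a /andP[a_gt0 a_le_m].
have a_range : (0 < a <= B)%N by rewrite a_gt0 -ltnS (leq_trans a_le_m).
rewrite (first_part_alternating a_range m_le_B).
case: (A a) => /=; last by rewrite mul0r big_pred0.
by rewrite mul1r big_nat_dvd //; apply: eq_bigr => j _; rewrite mulnK // mulrC.
Qed.

End FirstPartRecursion.

Lemma exchange_big_nat_triangle (V : nmodType) n (F : nat -> nat -> V) :
  \sum_(0 <= t < n) \sum_(0 <= k < n - t) F t k =
  \sum_(0 <= k < n) \sum_(0 <= t < n - k) F t k.
Proof.
have cut_off (G : nat -> nat -> V) : \sum_(0 <= t < n) \sum_(0 <= k < n - t) G t k =
    \sum_(0 <= t < n) \sum_(0 <= k < n | (t + k < n)%N) G t k.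
  apply: eq_big_nat => t _; rewrite (big_nat_widen _ _ n) ?leq_subr //.
  by apply: eq_bigl => k; rewrite ltn_subRL.
rewrite cut_off (cut_off (fun k t => F t k)) (exchange_big_dep_nat xpredT) //=.
by apply: eq_bigr => k _; apply: eq_bigl => t; rewrite addnC.
Qed.

Lemma cl_tauS (A : pred nat) m : (0 < m)%N ->
  (cl A m)%:Z = \sum_(0 <= k < m) (cl A k)%:Z * tauS A (m - k).
Proof.
move=> m_gt0; rewrite cl_sum_head // (big_morph _ PoszD (erefl 0%:Z)).
apply: (sum_first_part_tauS (B := m) (f := fun k => (cl A k)%:Z)
          (K := fun k a => (cl_head A k a)%:Z)) => // [k a _ k_lt_a|k a a_range _].
  by rewrite (cl_head_gt A k_lt_a).
rewrite (cl_head_rec A a_range) PoszM subzn //.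
by apply: sub_count => s /andP[].
Qed.

Lemma NqA_tauS (A : pred nat) m : (forall a, A a -> 0 < a)%N ->
  (NqA A m)%:Z = \sum_(0 <= k < m) (qA A k)%:Z * tauS A (m - k).
Proof.
move=> A_pos; rewrite (NqA_sum_dparts_with A_pos (leqnn m)).
rewrite (big_morph _ PoszD (erefl 0%:Z)).
under [RHS]eq_big_nat => k /andP[_ /ltnW k_le_m] do rewrite -(card_dparts_widen A k_le_m).
apply: (sum_first_part_tauS (B := m) (f := fun k => #|dparts A m k|%:Z)
          (K := fun k a => #|dparts_with A m k a|%:Z)) => //
  [k a a_le_m k_lt_a|k a a_range k_le_m].
  by rewrite (dparts_with_gt A a_le_m k_lt_a) cards0.
rewrite (card_dparts_with_rec A a_range k_le_m) PoszM subzn //.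
by rewrite subset_leq_card // /dparts_with setIdE subsetIl.
Qed.

Unset Implicit Arguments.
Theorem theorem7 (A : pred nat) (n : nat)
  (Apos : forall a : nat, A a -> (0 < a)%N) (Ane : exists a : nat, A a)
  (npos : (0 < n)%N) :
  ((cl A n)%:Z = \sum_(0 <= k < n) (cl A k)%:Z * tauS A (n - k))
  /\
  (\sum_(0 <= k < n.+1) (cl A k)%:Z * (qA A (n - k))%:Z
     - \sum_(0 <= t < n) (cl A t)%:Z * (NqA A (n - t))%:Z
   = (qA A n)%:Z).
Proof.
split; first exact: cl_tauS.
have cl_conv_NqA : \sum_(0 <= t < n) (cl A t)%:Z * (NqA A (n - t))%:Z =
                   \sum_(0 <= k < n) (qA A k)%:Z * (cl A (n - k))%:Z.
  under eq_big_nat => t _ do rewrite (NqA_tauS (n - t) Apos) big_distrr.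
  rewrite exchange_big_nat_triangle; apply: eq_big_nat => k /andP[_ k_lt_n].
  rewrite (cl_tauS A (m := n - k)) ?subn_gt0 // big_distrr; apply: eq_bigr => t _ /=.
  by rewrite mulrCA -!subnDA [(t + k)%N]addnC.
have cl_conv_qA : \sum_(0 <= k < n.+1) (cl A k)%:Z * (qA A (n - k))%:Z =
                  \sum_(0 <= k < n) (qA A k)%:Z * (cl A (n - k))%:Z + (qA A n)%:Z.
  have cl0 : cl A 0 = 1%N by [].
  rewrite big_nat_rev big_nat_recr //= add0n subnn.
  congr (_ + _); last by rewrite cl0 subn0 mul1r.
  by apply: eq_big_nat => k /andP[_ k_lt_n]; rewrite mulrC subSS (subKn (ltnW k_lt_n)).
by rewrite cl_conv_NqA cl_conv_qA addrAC subrr add0r.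
Qed.
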